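(* Consider the two-agent technology adoption game. There exists $\varepsilon_0>0$ such that for every $\varepsilon\in(0,\varepsilon_0)$ there is a nonempty open interval $J\subset(0,1)$ of costs such that for every $c\in J$: under random seeding there is an equilibrium in which the probability that both agents adopt is strictly greater than the probability that both adopt in every equilibrium under any single deterministic seed (seed 1 or seed 2).
   Context: Fix $\rho\in(0,1)$, $\varepsilon\in(0,1)$, two linked agents $1,2$, state $\theta\in\{g,b\}$ with $\Pr(\theta=g)=\rho$; in state $b$ no messages are sent. Every transmission is lost independently with probability $\varepsilon$. Deterministic seed $i$: in state $g$ the planner sends to $i$, who, if she receives it, forwards it to the other agent. Random seeding: the planner's seed is $1$ or $2$ with probability $1/2$ each, independently of everything else, and is not observed by the agents; then messages flow as under that deterministic seed. In all cases each agent observes only whether she received a message. Technology adoption game with cost $c\in(0,1)$: each agent chooses $a_i\in\{0,1\}$ (possibly mixed) as a function of her information; payoff $a_i(\mathbf 1[\theta=g\text{ and both adopt}]-c)$; equilibria are Bayesian Nash equilibria. *)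

From Stdlib Require Import Reals.
Open Scope R_scope.

(* States: th = true is the good state g, th = false is b.
   Signals: s_i = true iff agent i received a message. *)

Definition sumb (f : bool -> R) : R := f true + f false.

Definition sum3 (f : bool -> bool -> bool -> R) : R :=
  sumb (fun th => sumb (fun s1 => sumb (fun s2 => f th s1 s2))).

Definition dist := bool -> bool -> bool -> R.

(* Deterministic seed 1: in state g the planner sends to 1 (lost w.p. eps);
   if 1 receives it, 1 forwards to 2 (lost w.p. eps). In state b nothing. *)
Definition P_seed1 (rho eps : R) : dist := fun th s1 s2 =>
  if th then
    rho * (match s1, s2 with
           | false, false => eps
           | true, false => (1 - eps) * eps
           | true, true => (1 - eps) * (1 - eps)
           | false, true => 0
           end)
  else (if orb s1 s2 then 0 else 1 - rho).

Definition P_seed2 (rho eps : R) : dist := fun th s1 s2 => P_seed1 rho eps th s2 s1.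

(* Random seeding: seed 1 or 2 w.p. 1/2 each, unobserved by agents. *)
Definition P_random (rho eps : R) : dist := fun th s1 s2 =>
  / 2 * P_seed1 rho eps th s1 s2 + / 2 * P_seed2 rho eps th s1 s2.

(* A (possibly mixed) strategy: adoption probability as a function of the
   agent's information (whether she received a message). *)
Definition strat := bool -> R.
Definition valid_strat (s : strat) : Prop := forall x, 0 <= s x <= 1.

Definition U1 (P : dist) (c : R) (a1 a2 : strat) : R :=
  sum3 (fun th s1 s2 => P th s1 s2 * (a1 s1 * ((if th then a2 s2 else 0) - c))).
Definition U2 (P : dist) (c : R) (a1 a2 : strat) : R :=
  sum3 (fun th s1 s2 => P th s1 s2 * (a2 s2 * ((if th then a1 s1 else 0) - c))).

Definition is_BNE (P : dist) (c : R) (a1 a2 : strat) : Prop :=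
  valid_strat a1 /\ valid_strat a2 /\
  (forall t, valid_strat t -> U1 P c t a2 <= U1 P c a1 a2) /\
  (forall t, valid_strat t -> U2 P c a1 t <= U2 P c a1 a2).

Definition prob_both (P : dist) (a1 a2 : strat) : R :=
  sum3 (fun th s1 s2 => P th s1 s2 * (a1 s1 * a2 s2)).

(* Under a deterministic seed, say 1, costs just above 1 - eps rule out all
   adoption in equilibrium: agent 2 without a message is almost surely in
   state b, so she never adopts then; hence agent 1 with a message faces
   adoption by 2 with probability only 1 - eps < c, and agent 1 never adopts.
   Under random seeding a recipient does not know whether she was the seed or
   the forwardee, which raises her belief that the other agent was reached to
   (1 - eps)/(1 - eps/2); for c below that bound "adopt iff a message arrived"
   is an equilibrium, and both adopt with probability rho (1 - eps)^2 > 0. *)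

From Stdlib Require Import Reals Lra Psatz.
Open Scope R_scope.

Definition swap (P : dist) : dist := fun th s1 s2 => P th s2 s1.

Definition best_response (P : dist) (c : R) (a a' : strat) : Prop :=
  valid_strat a /\ forall t, valid_strat t -> U1 P c t a' <= U1 P c a a'.

(* Agent 1's expected gain from adopting on signal [s], weighted by the
   probability of [s] (so its sign is that of the interim gain). *)
Definition gain (P : dist) (c : R) (a' : strat) (s : bool) : R :=
  sumb (fun th => sumb (fun s' => P th s s' * ((if th then a' s' else 0) - c))).

Definition adopt_iff_received : strat := fun s => if s then 1 else 0.

Lemma U2_swap (P : dist) (c : R) (a1 a2 : strat) :
  U2 P c a1 a2 = U1 (swap P) c a2 a1.
Proof. unfold U1, U2, swap, sum3, sumb; ring. Qed.

Lemma prob_both_swap (P : dist) (a1 a2 : strat) :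
  prob_both (swap P) a2 a1 = prob_both P a1 a2.
Proof. unfold prob_both, swap, sum3, sumb; ring. Qed.

Lemma is_BNE_best_responses (P : dist) (c : R) (a1 a2 : strat) :
  is_BNE P c a1 a2 <-> best_response P c a1 a2 /\ best_response (swap P) c a2 a1.
Proof.
  unfold is_BNE, best_response.
  split.
  - intros (V1 & V2 & D1 & D2).
    refine (conj (conj V1 D1) (conj V2 _)).
    intros t Ht; rewrite <- !U2_swap; auto.
  - intros [[V1 D1] [V2 D2]].
    refine (conj V1 (conj V2 (conj D1 _))).
    intros t Ht; rewrite !U2_swap; auto.
Qed.

Lemma is_BNE_swap (P : dist) (c : R) (a1 a2 : strat) :
  is_BNE P c a1 a2 -> is_BNE (swap P) c a2 a1.
Proof. rewrite !is_BNE_best_responses; tauto. Qed.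

Lemma U1_gain (P : dist) (c : R) (t a' : strat) :
  U1 P c t a' = t true * gain P c a' true + t false * gain P c a' false.
Proof. unfold U1, gain, sum3, sumb; ring. Qed.

Lemma best_response_gain_neg (P : dist) (c : R) (a a' : strat) (s : bool) :
  best_response P c a a' -> gain P c a' s < 0 -> a s = 0.
Proof.
  intros [Va BR] Hneg.
  (* Compare with the deviation that drops adoption on signal [s]. *)
  set (t := fun x : bool => if Bool.eqb x s then 0 else a x).
  assert (Vt : valid_strat t).
  { intros x; unfold t; destruct (Bool.eqb x s); [lra | apply Va]. }
  specialize (BR t Vt); rewrite !U1_gain in BR.
  pose proof (Va s).
  destruct s; unfold t in BR; simpl in BR; nra.
Qed.

Lemma adopt_iff_received_best_response (P : dist) (c : R) (a' : strat) :
  0 <= gain P c a' true -> gain P c a' false <= 0 ->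
  best_response P c adopt_iff_received a'.
Proof.
  intros Gt Gf; split.
  - intros [|]; simpl; lra.
  - intros t Vt; rewrite !U1_gain; simpl.
    pose proof (Vt true); pose proof (Vt false); nra.
Qed.

Section Seed1.

Variables rho eps c : R.
Hypothesis rho_range : 0 < rho < 1.
Hypothesis eps_pos : 0 < eps.
Hypothesis eps_small : eps < (1 - rho) / 2.
Hypothesis c_range : 1 - eps < c < 1.

Lemma seed1_uninformed_follower_abstains (b1 b2 : strat) :
  is_BNE (P_seed1 rho eps) c b1 b2 -> b2 false = 0.
Proof.
  rewrite is_BNE_best_responses; intros [BR1 BR2].
  apply (best_response_gain_neg _ _ _ _ _ BR2).
  pose proof (proj1 BR1 true); pose proof (proj1 BR1 false).
  unfold gain, swap, sumb, P_seed1; simpl.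
  assert (2 * eps * (1 - c) < (1 - rho) * c) by nra.
  assert (rho * ((1 - eps) * eps) * (b1 true - c) <= eps * (1 - c)).
  { assert (0 <= rho * (1 - eps) <= 1) by nra.
    assert (rho * ((1 - eps) * eps) * (b1 true - c)
            <= rho * ((1 - eps) * eps) * (1 - c))
      by (apply Rmult_le_compat_l; nra).
    assert (rho * (1 - eps) * (eps * (1 - c)) <= 1 * (eps * (1 - c)))
      by (apply Rmult_le_compat_r; nra).
    lra. }
  assert (rho * eps * (b1 false - c) <= rho * eps * (1 - c))
    by (apply Rmult_le_compat_l; nra).
  assert (rho * (eps * (1 - c)) <= 1 * (eps * (1 - c)))
    by (apply Rmult_le_compat_r; nra).
  lra.
Qed.

Lemma seed1_leader_abstains (b1 b2 : strat) :
  is_BNE (P_seed1 rho eps) c b1 b2 -> forall s, b1 s = 0.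
Proof.
  intros H; pose proof (seed1_uninformed_follower_abstains _ _ H) as Hb2f.
  rewrite is_BNE_best_responses in H; destruct H as [BR1 BR2].
  pose proof (proj1 BR2 true).
  intros s; apply (best_response_gain_neg _ _ _ _ _ BR1).
  unfold gain, sumb, P_seed1; rewrite Hb2f; destruct s; simpl.
  - (* informed leader: the follower is reached with probability 1 - eps < c *)
    replace (_ + _) with (rho * (1 - eps) * ((1 - eps) * b2 true - c)) by ring.
    apply Rmult_pos_neg; nra.
  - assert (0 < rho * eps * c) by (apply Rmult_lt_0_compat; nra).
    assert (0 < (1 - rho) * c) by (apply Rmult_lt_0_compat; lra).
    lra.
Qed.

Lemma seed1_no_joint_adoption (b1 b2 : strat) :
  is_BNE (P_seed1 rho eps) c b1 b2 -> prob_both (P_seed1 rho eps) b1 b2 = 0.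
Proof.
  intros H; pose proof (seed1_leader_abstains _ _ H) as Hb1.
  unfold prob_both, sum3, sumb; rewrite !Hb1; ring.
Qed.

Lemma seed2_no_joint_adoption (b1 b2 : strat) :
  is_BNE (P_seed2 rho eps) c b1 b2 -> prob_both (P_seed2 rho eps) b1 b2 = 0.
Proof.
  intros H; apply is_BNE_swap in H.
  change (prob_both (swap (P_seed1 rho eps)) b1 b2 = 0).
  rewrite prob_both_swap; now apply seed1_no_joint_adoption.
Qed.

End Seed1.

Section RandomSeeding.

Variables rho eps c : R.
Hypothesis rho_range : 0 < rho < 1.
Hypothesis eps_range : 0 < eps < 1 / 2.
Hypothesis c_range : 1 - eps < c <= 2 * (1 - eps) / (2 - eps).

Lemma gain_swap_random (a' : strat) (s : bool) :
  gain (swap (P_random rho eps)) c a' s = gain (P_random rho eps) c a' s.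
Proof. destruct s; unfold gain, swap, sumb, P_random, P_seed1; simpl; ring. Qed.

Lemma gain_random_received :
  gain (P_random rho eps) c adopt_iff_received true
  = rho * (1 - eps) * ((1 - eps) - c * (1 - eps / 2)).
Proof. unfold gain, sumb, P_random, P_seed1; simpl; field. Qed.

Lemma gain_random_not_received :
  gain (P_random rho eps) c adopt_iff_received false
  = / 2 * rho * (1 - eps) * eps * (1 - c) - rho * eps * c - (1 - rho) * c.
Proof. unfold gain, sumb, P_random, P_seed1; simpl; field. Qed.

Lemma random_adopt_iff_received_BNE :
  is_BNE (P_random rho eps) c adopt_iff_received adopt_iff_received.
Proof.
  assert (Gt : 0 <= gain (P_random rho eps) c adopt_iff_received true).
  { rewrite gain_random_received.
    assert (c * (2 - eps) <= 2 * (1 - eps)).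
    { apply (Rmult_le_reg_r (/ (2 - eps))); [apply Rinv_0_lt_compat; lra|].
      rewrite Rmult_assoc, Rinv_r; lra. }
    apply Rmult_le_pos; nra. }
  assert (Gf : gain (P_random rho eps) c adopt_iff_received false <= 0).
  { rewrite gain_random_not_received.
    assert (rho * eps * (/ 2 * (1 - eps) * (1 - c) - c) <= rho * eps * 0)
      by (apply Rmult_le_compat_l; nra).
    assert (0 <= (1 - rho) * c) by (apply Rmult_le_pos; lra).
    nra. }
  apply is_BNE_best_responses; split;
    apply adopt_iff_received_best_response; rewrite ?gain_swap_random; assumption.
Qed.

Lemma random_joint_adoption_pos :
  0 < prob_both (P_random rho eps) adopt_iff_received adopt_iff_received.
Proof.
  unfold prob_both, sum3, sumb, P_random, P_seed1; simpl.
  assert (0 < rho * ((1 - eps) * (1 - eps))) by (apply Rmult_lt_0_compat; nra).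
  lra.
Qed.

End RandomSeeding.

Lemma random_seeding_cost_window (eps : R) :
  0 < eps < 1 -> 1 - eps < 2 * (1 - eps) / (2 - eps) <= 1.
Proof.
  intros He; unfold Rdiv.
  set (k := / (2 - eps)).
  assert (Hk : k * (2 - eps) = 1) by (apply Rinv_l; lra).
  assert (0 < k) by (apply Rinv_0_lt_compat; lra).
  assert (k < 1) by nra.
  split; nra.
Qed.

Theorem mainTheorem13 (rho : R) (Hrho : 0 < rho < 1) :
  exists eps0 : R, 0 < eps0 /\
  forall eps : R, 0 < eps < eps0 -> eps < 1 ->
  exists a b : R, 0 <= a /\ a < b /\ b <= 1 /\
  forall c : R, a < c < b ->
  exists a1 a2 : strat,
    is_BNE (P_random rho eps) c a1 a2 /\
    (forall b1 b2 : strat, is_BNE (P_seed1 rho eps) c b1 b2 ->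
       prob_both (P_seed1 rho eps) b1 b2 < prob_both (P_random rho eps) a1 a2) /\
    (forall b1 b2 : strat, is_BNE (P_seed2 rho eps) c b1 b2 ->
       prob_both (P_seed2 rho eps) b1 b2 < prob_both (P_random rho eps) a1 a2).
Proof.
  exists ((1 - rho) / 2); split; [lra|].
  intros eps [eps_pos eps_small] _.
  pose proof (random_seeding_cost_window eps ltac:(lra)) as Hb.
  exists (1 - eps), (2 * (1 - eps) / (2 - eps)).
  split; [lra|]; split; [lra|]; split; [lra|].
  intros c Hc.
  assert (c_range : 1 - eps < c < 1) by lra.
  exists adopt_iff_received, adopt_iff_received.
  pose proof (random_joint_adoption_pos rho eps Hrho ltac:(lra)) as Hpos.
  split; [apply random_adopt_iff_received_BNE; lra|].
  split; intros b1 b2 H.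
  - now rewrite (seed1_no_joint_adoption rho eps c Hrho eps_pos eps_small c_range b1 b2 H).
  - now rewrite (seed2_no_joint_adoption rho eps c Hrho eps_pos eps_small c_range b1 b2 H).
Qed.
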